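(* Let $k$ be a field of characteristic zero, $R=k[[x_1,\dots,x_n]]$, and let $K\hookrightarrow L$ be a field extension where $K$ is an $R$-algebra (and $L$ is regarded as an $R$-algebra via $K$). Then there is an exact sequence $$0\to\Omega'_{K/k}\otimes_KL\to\Omega'_{L/k}\to\Omega_{L/K}\to0.$$
   Context: For an $R$-algebra $A$, $\Omega'_{A/k}$ denotes the module of special differentials: the $A$-module representing special $k$-derivations, i.e. $k$-derivations $D\colon A\to M$ with $D(f)=\sum_i\frac{\partial f}{\partial x_i}D(x_i)$ for all $f\in R$. $\Omega_{L/K}$ is the usual module of Kähler differentials. The first map sends $d'_{K/k}(f)\otimes1$ to $d'_{L/k}(f)$ and the second sends $d'_{L/k}(f)$ to $d_{L/K}(f)$. *)

From HB Require Import structures.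
From mathcomp Require Import all_boot all_order all_algebra.
Set Implicit Arguments. Unset Strict Implicit. Unset Printing Implicit Defensive.
Import Order.TTheory GRing.Theory.
Local Open Scope ring_scope.

(* A monomial exponent (multi-index) is a function 'I_n -> nat;
   a formal power series is its (arbitrary) coefficient function. *)
Definition mono (n : nat) := 'I_n -> nat.
Definition ps (k : fieldType) (n : nat) := mono n -> k.

Section PS.
Variables (k : fieldType) (n : nat).

Definition psC (c : k) : ps k n :=
  fun m => if [forall j, m j == 0%N] then c else 0.
Definition ps1 : ps k n := psC 1.
Definition psadd (f g : ps k n) : ps k n := fun m => f m + g m.
(* Cauchy product: (fg)_m = sum_{a <= m} f_a g_{m-a}. *)
Definition psmul (f g : ps k n) : ps k n := fun m =>
  \sum_(a : {ffun 'I_n -> 'I_(\max_(i < n) m i).+1} | [forall i, (a i <= m i)%N])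
     f (fun i => nat_of_ord (a i)) * g (fun i => (m i - a i)%N).
Definition psX (i : 'I_n) : ps k n :=
  fun m => if [forall j, m j == (j == i) :> nat] then 1 else 0.
Definition psd (i : 'I_n) (f : ps k n) : ps k n :=
  fun m => (m i).+1%:R * f (fun j => (m j + (j == i))%N).

(* phi : R -> A is a (unital) ring homomorphism, i.e. A is an R-algebra. *)
Definition ps_alg_map (A : nzRingType) (phi : ps k n -> A) :=
  [/\ forall f g, phi (psadd f g) = phi f + phi g,
      forall f g, phi (psmul f g) = phi f * phi g &
      phi ps1 = 1].

Definition special_der (A : comNzRingType) (phi : ps k n -> A)
  (M : lmodType A) (D : A -> M) :=
  [/\ forall x y, D (x + y) = D x + D y,
      forall x y, D (x * y) = x *: D y + y *: D x,
      forall c, D (phi (psC c)) = 0 &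
      forall f, D (phi f) = \sum_(i < n) phi (psd i f) *: D (phi (psX i))].

End PS.

Definition islin (A : nzRingType) (U V : lmodType A) (h : U -> V) :=
  forall a u v, h (a *: u + v) = a *: h u + h v.

(* (Om, d) represents special k-derivations of A: the module Omega'_{A/k}. *)
Definition special_universal (k : fieldType) (n : nat) (A : comNzRingType)
  (phi : ps k n -> A) (Om : lmodType A) (d : A -> Om) :=
  special_der phi d /\
  forall (M : lmodType A) (D : A -> M), special_der phi D ->
    exists h : Om -> M, [/\ islin h, forall x, h (d x) = D x &
      forall h' : Om -> M, islin h' -> (forall x, h' (d x) = D x) -> h' =1 h].

Definition kahler_der (K L : fieldType) (iota : {rmorphism K -> L})
  (M : lmodType L) (D : L -> M) :=
  [/\ forall x y, D (x + y) = D x + D y,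
      forall x y, D (x * y) = x *: D y + y *: D x &
      forall a, D (iota a) = 0].

(* (Om, d) is the module of Kaehler differentials Omega_{L/K}. *)
Definition kahler_universal (K L : fieldType) (iota : {rmorphism K -> L})
  (Om : lmodType L) (d : L -> Om) :=
  kahler_der iota d /\
  forall (M : lmodType L) (D : L -> M), kahler_der iota D ->
    exists h : Om -> M, [/\ islin h, forall x, h (d x) = D x &
      forall h' : Om -> M, islin h' -> (forall x, h' (d x) = D x) -> h' =1 h].

Definition semilin (K L : fieldType) (iota : {rmorphism K -> L})
  (U : lmodType K) (V : lmodType L) (g : U -> V) :=
  forall a u v, g (a *: u + v) = iota a *: g u + g v.

(* (T, j) is the base change U (x)_K L, with j u = u (x) 1. *)
Definition base_change (K L : fieldType) (iota : {rmorphism K -> L})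
  (U : lmodType K) (T : lmodType L) (j : U -> T) :=
  semilin iota j /\
  forall (M : lmodType L) (g : U -> M), semilin iota g ->
    exists h : T -> M, [/\ islin h, forall u, h (j u) = g u &
      forall h' : T -> M, islin h' -> (forall u, h' (j u) = g u) -> h' =1 h].

From HB Require Import structures.
From mathcomp Require Import all_boot all_order all_algebra zify.
From mathcomp Require Import boolp classical_sets.
Set Implicit Arguments. Unset Strict Implicit. Unset Printing Implicit Defensive.
Import GRing.Theory.
Local Open Scope ring_scope.

(* In characteristic zero every derivation D of K into an L-module extends to L: by
   Zorn's lemma take a maximal subring of the dual numbers L + M e that is the graph of
   a derivation extending D.  To adjoin y, take a nonzero polynomial P over the graph
   of minimal degree vanishing at y (if any); since P'(y) <> 0 one can solve
   P(y + m e) = 0, and pseudo-division by P shows that the enlarged graph is still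
   the graph of a function.  Extending d'_K (x) 1 along K -> L yields a retraction g
   of the first map u; then id - u o g kills d'_L(K), so it factors through
   Omega_{L/K} as a section of the second map v, and the sequence is split exact. *)

Definition dualnum (L : fieldType) (M : lmodType L) : Type := (L * M)%type.
HB.instance Definition _ (L : fieldType) (M : lmodType L) :=
  GRing.Zmodule.on (dualnum M).

Section DualNumbers.
Variables (L : fieldType) (M : lmodType L).

Definition dualnum_mul (a b : dualnum M) : dualnum M :=
  (a.1 * b.1, a.1 *: b.2 + b.1 *: a.2).
Definition dualnum_one : dualnum M := (1, 0).

Lemma dualnum_mulA : associative dualnum_mul.
Proof.
move=> [a u] [b v] [c w]; rewrite /dualnum_mul /=; congr pair; first by rewrite mulrA.
by rewrite !scalerDr !scalerA -addrA [c * a]mulrC [c * b]mulrC.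
Qed.

Lemma dualnum_mulC : commutative dualnum_mul.
Proof. by move=> [a u] [b v]; rewrite /dualnum_mul /= mulrC addrC. Qed.

Lemma dualnum_mul1 : left_id dualnum_one dualnum_mul.
Proof. by move=> [a u]; rewrite /dualnum_mul /= mul1r scale1r scaler0 addr0. Qed.

Lemma dualnum_mulDl : left_distributive dualnum_mul +%R.
Proof.
move=> [a u] [b v] [c w]; rewrite /dualnum_mul /= mulrDl scalerDl scalerDr.
by rewrite addrACA.
Qed.

Lemma dualnum_one_neq0 : dualnum_one != 0.
Proof. by apply/eqP => -[] /eqP; rewrite oner_eq0. Qed.

HB.instance Definition _ := GRing.Zmodule_isComNzRing.Build (dualnum M)
  dualnum_mulA dualnum_mulC dualnum_mul1 dualnum_mulDl dualnum_one_neq0.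

Lemma dualnum_addE (a b : dualnum M) : a + b = (a.1 + b.1, a.2 + b.2).
Proof. by []. Qed.

Lemma dualnum_mulE (a b : dualnum M) : a * b = (a.1 * b.1, a.1 *: b.2 + b.1 *: a.2).
Proof. by []. Qed.

Lemma dualnum_mul_eq0 (a b : dualnum M) : a.1 != 0 -> b.1 = 0 -> a * b = 0 -> b = 0.
Proof.
move: a b => [a u] [b v] /= a0 -> [_]; rewrite scale0r addr0 => /eqP.
by rewrite scaler_eq0 (negbTE a0) => /eqP ->.
Qed.

Definition dualnum_fst (a : dualnum M) : L := a.1.

Fact dualnum_fst_is_zmod_morphism : zmod_morphism dualnum_fst. Proof. by []. Qed.
Fact dualnum_fst_is_monoid_morphism : monoid_morphism dualnum_fst. Proof. by []. Qed.
HB.instance Definition _ := GRing.isZmodMorphism.Build (dualnum M) L dualnum_fst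
  dualnum_fst_is_zmod_morphism.
HB.instance Definition _ := GRing.isMonoidMorphism.Build (dualnum M) L dualnum_fst
  dualnum_fst_is_monoid_morphism.

End DualNumbers.

Local Notation "p ^fst" := (map_poly (@dualnum_fst _ _) p) (at level 2, format "p ^fst").

Section DualNumberPolynomials.
Variables (L : fieldType) (M : lmodType L).

Lemma horner_dualnum_fst (Q : {poly dualnum M}) y f : Q^fst.[y] = (Q.[(y, f)]).1.
Proof. by rewrite -[y]/(dualnum_fst (y, f)) horner_map. Qed.

Lemma horner_dualnum (Q : {poly dualnum M}) y f :
  Q.[(y, f)] = Q.[(y, 0)] + (0, Q^fst^`().[y] *: f).
Proof.
elim/poly_ind: Q => [|Q c IH]; first by rewrite rmorph0 deriv0 !horner0 scale0r addr0.
rewrite !hornerE IH rmorphD rmorphM /= map_polyX map_polyC /= derivD derivC addr0.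
rewrite derivM derivX mulr1 !hornerE /= (horner_dualnum_fst Q y 0).
rewrite !dualnum_mulE /= addrAC; congr (_ + _).
rewrite !addr0 scaler0 add0r scalerDr scalerDl scalerA [y * _]mulrC.
by rewrite dualnum_addE /= addr0 addrCA [_ *: f + _]addrC.
Qed.

Lemma ex_dualnum_root (Q : {poly dualnum M}) y :
  Q^fst.[y] = 0 -> Q^fst^`().[y] != 0 -> exists e, Q.[(y, e)] = 0.
Proof.
move=> Qy dQy; exists (- (Q^fst^`().[y])^-1 *: (Q.[(y, 0)]).2).
rewrite horner_dualnum scalerA mulrN mulfV // scaleN1r.
have: (Q.[(y, 0)]).1 = 0 by rewrite -horner_dualnum_fst.
by case: (Q.[(y, 0)]) => a b /= ->; rewrite dualnum_addE /= addr0 subrr.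
Qed.

End DualNumberPolynomials.

Lemma deriv_neq0_pchar0 (R : idomainType) (p : {poly R}) :
  [pchar R] =i pred0 -> (1 < size p)%N -> p^`() != 0.
Proof.
move=> /pcharf0P R0 sp; apply/eqP => dp0.
have := congr1 (fun q : {poly R} => q`_(size p).-2) dp0.
rewrite /= coef_deriv coef0.
have -> : (size p).-2.+1 = (size p).-1 by case: (size p) sp => [|[]].
rewrite -mulr_natr -lead_coefE => /eqP.
by rewrite mulf_eq0 lead_coef_eq0 R0 -size_poly_eq0; case: (size p) sp => [|[]].
Qed.

Lemma size_lead_cancel (R : comNzRingType) (P Q : {poly R}) :
  (0 < size P)%N -> (size P <= size Q)%N ->
  (size (lead_coef P *: Q - lead_coef Q *: ('X^(size Q - size P) * P))%R < size Q)%N.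
Proof.
move=> sP sPQ; suff: (size (lead_coef P *: Q - lead_coef Q *: ('X^(size Q - size P) * P))%R
  <= (size Q).-1)%N by lia.
apply/leq_sizeP => j hj.
rewrite coefB !coefZ coefXnM ltnNge (_ : (size Q - size P <= j)%N); last by lia.
have [->|ne] := eqVneq j (size Q).-1.
  by rewrite (_ : _ - _ = (size P).-1)%N; [rewrite mulrC subrr | lia].
have sQj : (size Q <= j)%N by move: hj ne; rewrite neq_ltn; lia.
have sPj : (size P <= j - (size Q - size P))%N by lia.
by rewrite !nth_default ?mulr0 ?subr0.
Qed.

Section DerivationGraph.
Local Open Scope classical_set_scope.
Variables (K L : fieldType) (iota : {rmorphism K -> L}) (M : lmodType L) (D : K -> M).
Hypothesis derD : forall x y, D (x + y) = D x + D y.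
Hypothesis derM : forall x y, D (x * y) = iota x *: D y + iota y *: D x.

Lemma der0 : D 0 = 0.
Proof. by apply: (addrI (D 0)); rewrite -derD !addr0. Qed.

Lemma der1 : D 1 = 0.
Proof.
have := derM 1 1; rewrite mulr1 rmorph1 !scale1r => D11.
by apply: (addrI (D 1)); rewrite addr0 -D11.
Qed.

(* Subrings of the dual numbers L + M e that are the graph of a map (necessarily a
   derivation) extending [D]. *)
Definition der_graph (G : set (dualnum M)) :=
  [/\ forall a b, G a -> G b -> a.1 = b.1 -> a = b,
      forall a b, G a -> G b -> G (a + b),
      forall a b, G a -> G b -> G (a * b),
      forall a, G a -> G (- a) &
      forall a, G (iota a, D a)].

Definition coefs_in (G : set (dualnum M)) (Q : {poly dualnum M}) := forall i, G Q`_i.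

Section GraphRing.
Variable G : set (dualnum M).
Hypothesis gG : der_graph G.

Lemma der_graph_eq a b : G a -> G b -> a.1 = b.1 -> a = b.
Proof. by case: gG => + _ _ _ _; apply. Qed.
Lemma der_graphD a b : G a -> G b -> G (a + b).
Proof. by case: gG => _ + _ _ _; apply. Qed.
Lemma der_graphM a b : G a -> G b -> G (a * b).
Proof. by case: gG => _ _ + _ _; apply. Qed.
Lemma der_graphN a : G a -> G (- a).
Proof. by case: gG => _ _ _ + _; apply. Qed.
Lemma der_graph0 : G 0.
Proof. by case: gG => _ _ _ _ /(_ 0); rewrite rmorph0 der0. Qed.
Lemma der_graph1 : G 1.
Proof. by case: gG => _ _ _ _ /(_ 1); rewrite rmorph1 der1. Qed.

Lemma der_graph_sum (I : Type) (r : seq I) (P : pred I) (F : I -> dualnum M) :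
  (forall i, P i -> G (F i)) -> G (\sum_(i <- r | P i) F i).
Proof. by move=> GF; apply: (big_ind G); [exact: der_graph0 | exact: der_graphD |]. Qed.

Lemma der_graph_muln a m : G a -> G (a *+ m).
Proof.
move=> Ga; elim: m => [|m IHm]; first by rewrite mulr0n; exact: der_graph0.
by rewrite mulrS; apply: der_graphD.
Qed.

Lemma coefs_inD P Q : coefs_in G P -> coefs_in G Q -> coefs_in G (P + Q).
Proof. by move=> GP GQ i; rewrite coefD; apply: der_graphD. Qed.
Lemma coefs_inN P : coefs_in G P -> coefs_in G (- P).
Proof. by move=> GP i; rewrite coefN; apply: der_graphN. Qed.
Lemma coefs_inM P Q : coefs_in G P -> coefs_in G Q -> coefs_in G (P * Q).
Proof. by move=> GP GQ i; rewrite coefM; apply: der_graph_sum => j _; apply: der_graphM. Qed.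
Lemma coefs_inZ c P : G c -> coefs_in G P -> coefs_in G (c *: P).
Proof. by move=> Gc GP i; rewrite coefZ; apply: der_graphM. Qed.
Lemma coefs_inC c : G c -> coefs_in G c%:P.
Proof. by move=> Gc i; rewrite coefC; case: eqP => _; [|exact: der_graph0]. Qed.
Lemma coefs_inXn m : coefs_in G 'X^m.
Proof. by move=> i; rewrite coefXn; case: eqP => _; [exact: der_graph1 | exact: der_graph0]. Qed.
Lemma coefs_in_deriv P : coefs_in G P -> coefs_in G P^`().
Proof. by move=> GP i; rewrite coef_deriv; apply: der_graph_muln. Qed.

Lemma lead_coef_fst_neq0 Q : coefs_in G Q -> Q != 0 -> (lead_coef Q).1 != 0.
Proof.
move=> GQ; apply: contraNneq => lQ0; rewrite -lead_coef_eq0.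
by apply/eqP/(der_graph_eq (GQ _) der_graph0).
Qed.

Lemma size_fst_poly Q : coefs_in G Q -> size Q^fst = size Q.
Proof.
move=> GQ; have [->|Q0] := eqVneq Q 0; first by rewrite map_poly0 !size_poly0.
by apply: size_map_poly_id0; apply: lead_coef_fst_neq0.
Qed.

End GraphRing.

Lemma der_graph_range : der_graph (range (fun a => (iota a, D a))).
Proof.
split.
- by move=> _ _ [a _ <-] [b _ <-] /= /fmorph_inj ->.
- by move=> _ _ [a _ <-] [b _ <-]; exists (a + b); rewrite // rmorphD derD.
- by move=> _ _ [a _ <-] [b _ <-]; exists (a * b); rewrite // rmorphM derM.
- move=> _ [a _ <-]; exists (- a) => //; rewrite rmorphN; congr pair.
  by apply: (addrI (D a)); rewrite -derD !subrr der0.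
- by move=> a; exists a.
Qed.

Lemma der_graph_bigcup (F : set (set (dualnum M))) :
  F `<=` [set G | der_graph G \/ G = set0] -> total_on F subset ->
  (\bigcup_(X in F) X) !=set0 -> der_graph (\bigcup_(X in F) X).
Proof.
move=> FP Ftot [z [Z FZ Zz]].
have good X a : F X -> X a -> der_graph X by move=> /FP[//|->].
have common a b : (\bigcup_(X in F) X) a -> (\bigcup_(X in F) X) b ->
    exists X, [/\ F X, der_graph X, X a & X b].
  move=> [X FX Xa] [Y FY Yb]; have [XY|YX] := Ftot _ _ FX FY.
    by exists Y; split => //; [apply: good FY Yb | apply: XY].
  by exists X; split => //; [apply: good FX Xa | apply: YX].
split.
- move=> a b Ua Ub; have [X [_ gX Xa Xb]] := common a b Ua Ub.
  exact: (der_graph_eq gX Xa Xb).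
- move=> a b Ua Ub; have [X [FX gX Xa Xb]] := common a b Ua Ub.
  by exists X => //; exact: (der_graphD gX Xa Xb).
- move=> a b Ua Ub; have [X [FX gX Xa Xb]] := common a b Ua Ub.
  by exists X => //; exact: (der_graphM gX Xa Xb).
- by move=> a [X FX Xa]; exists X => //; exact: (der_graphN (good _ _ FX Xa) Xa).
- by move=> a; exists Z => //; case: (good _ _ FZ Zz).
Qed.

Section Adjoin.
Hypothesis charL : [pchar L] =i pred0.
Variables (G : set (dualnum M)) (x : L).
Hypothesis gG : der_graph G.

Section MinimalAnnihilator.
Variable P : {poly dualnum M}.
Hypotheses (PG : coefs_in G P) (Px : P^fst.[x] = 0) (P0 : P != 0).
Hypothesis Pmin :
  forall Q, coefs_in G Q -> Q^fst.[x] = 0 -> Q != 0 -> (size P <= size Q)%N.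

Lemma min_annihilator_deriv_neq0 : P^fst^`().[x] != 0.
Proof.
have sP2 : (1 < size P^fst)%N.
  rewrite ltnNge; apply/negP => /size1_polyC pC.
  have : P^fst != 0 by rewrite -size_poly_eq0 (size_fst_poly gG PG) size_poly_eq0.
  by move: Px; rewrite {1}pC hornerC => Px0; rewrite pC Px0 polyC0 eqxx.
apply: contraTneq (lt_size_deriv P0) => dPx; rewrite -leqNgt.
apply: Pmin; [exact: coefs_in_deriv | by rewrite -deriv_map |].
apply: contra_neq (deriv_neq0_pchar0 charL sP2) => dP0.
by rewrite deriv_map dP0 map_poly0.
Qed.

Lemma horner_min_annihilator_eq0 e : P.[(x, e)] = 0 ->
  forall Q, coefs_in G Q -> Q^fst.[x] = 0 -> Q.[(x, e)] = 0.
Proof.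
move=> Pe Q; elim: {Q}(size Q) {-2}Q (leqnn (size Q)) => [|m IHm] Q sQ GQ Qx.
  by move: sQ; rewrite leqn0 size_poly_eq0 => /eqP ->; rewrite horner0.
have [->|Q0] := eqVneq Q 0; first by rewrite horner0.
have sPQ := Pmin GQ Qx Q0.
pose R := lead_coef P *: Q - lead_coef Q *: ('X^(size Q - size P) * P).
have sR : (size R < size Q)%N by apply: size_lead_cancel; rewrite // size_poly_gt0.
have GR : coefs_in G R.
  apply: (coefs_inD gG); first exact: (coefs_inZ gG (PG _) GQ).
  apply/(coefs_inN gG)/(coefs_inZ gG (GQ _)).
  by apply: (coefs_inM gG) => //; apply: coefs_inXn.
have Rx : R^fst.[x] = 0.
  rewrite /R rmorphB /= !map_polyZ rmorphM /= hornerD hornerN !hornerZ hornerM.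
  by rewrite Qx Px !mulr0 subrr.
have := IHm R (leq_trans sR sQ) GR Rx.
rewrite hornerD hornerN !hornerZ hornerM Pe mulr0 mulr0 subr0; apply: dualnum_mul_eq0.
  exact: (lead_coef_fst_neq0 gG).
by rewrite -horner_dualnum_fst.
Qed.

End MinimalAnnihilator.

Lemma ex_adjoin_value :
  exists e, forall Q, coefs_in G Q -> Q^fst.[x] = 0 -> Q.[(x, e)] = 0.
Proof.
pose ann Q := [/\ coefs_in G Q, Q^fst.[x] = 0 & Q != 0].
have [[Q1 annQ1]|none] := pselect (exists Q, ann Q); last first.
  exists 0 => Q GQ Qx; have [->|Q0] := eqVneq Q 0; first by rewrite horner0.
  by exfalso; apply: none; exists Q.
have hsize : exists m, `[< exists Q, ann Q /\ size Q = m >].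
  by exists (size Q1); apply/asboolP; exists Q1.
case: (ex_minnP hsize) => _ /asboolP [P [[PG Px P0] <-]] Pmin.
have {}Pmin Q : coefs_in G Q -> Q^fst.[x] = 0 -> Q != 0 -> (size P <= size Q)%N.
  by move=> GQ Qx Q0; apply: Pmin; apply/asboolP; exists Q.
have [e Pe] := ex_dualnum_root Px (min_annihilator_deriv_neq0 PG Px P0 Pmin).
by exists e; apply: horner_min_annihilator_eq0 Pe.
Qed.

Lemma der_graph_adjoin : exists G', [/\ der_graph G', G `<=` G' & exists e, G' (x, e)].
Proof.
have [e ext] := ex_adjoin_value.
exists [set Q.[(x, e)] | Q in coefs_in G]; split.
- split.
  + move=> _ _ [Q1 GQ1 <-] [Q2 GQ2 <-] Q12.
    apply/eqP; rewrite -subr_eq0 -hornerN -hornerD.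
    apply/eqP/ext; first by apply: (coefs_inD gG) => //; apply: (coefs_inN gG).
    by rewrite rmorphB hornerD hornerN !(horner_dualnum_fst _ _ e) Q12 subrr.
  + move=> _ _ [Q1 GQ1 <-] [Q2 GQ2 <-].
    by exists (Q1 + Q2); [exact: (coefs_inD gG) | rewrite hornerD].
  + move=> _ _ [Q1 GQ1 <-] [Q2 GQ2 <-].
    by exists (Q1 * Q2); [exact: (coefs_inM gG) | rewrite hornerM].
  + by move=> _ [Q1 GQ1 <-]; exists (- Q1); [exact: (coefs_inN gG) | rewrite hornerN].
  + move=> a; exists ((iota a, D a) : dualnum M)%:P; last exact: hornerC.
    by apply: (coefs_inC gG); case: gG.
- by move=> z Gz; exists z%:P; [exact: (coefs_inC gG) | rewrite hornerC].
- by exists e, 'X; [exact: (coefs_inXn gG 1) | rewrite hornerX].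
Qed.

End Adjoin.

Theorem derivation_extends : [pchar L] =i pred0 ->
  exists E : L -> M,
    [/\ forall x y, E (x + y) = E x + E y,
        forall x y, E (x * y) = x *: E y + y *: E x &
        forall a, E (iota a) = D a].
Proof.
move=> charL.
pose P := [set G : set (dualnum M) | der_graph G \/ G = set0].
have chainP F : F `<=` P -> total_on F subset -> P (\bigcup_(X in F) X).
  move=> FP Ftot; have [ne|empty] := pselect ((\bigcup_(X in F) X) !=set0).
    by left; apply: der_graph_bigcup.
  by right; apply/seteqP; split => // z Uz; apply: empty; exists z.
have [A [PA Amax]] := Zorn_bigcup chainP.
have gA : der_graph A.
  case: PA => // A0; exfalso; apply: (Amax _ _ (or_introl der_graph_range)).
  by rewrite A0; split => // /(_ (iota 0, D 0)); apply; exists 0.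
have totA y : exists m, A (y, m).
  apply: contrapT => noy; have [G' [gG' AG' [e G'e]]] := der_graph_adjoin charL y gA.
  by apply: (Amax G' _ (or_introl gG')); split => // G'A; apply: noy; exists e; apply: G'A.
pose E y := projT1 (cid (totA y)).
have AE y : A (y, E y) := projT2 (cid (totA y)).
have Eeq y m : A (y, m) -> E y = m.
  by move=> Aym; have [] := der_graph_eq gA (AE y) Aym erefl.
exists E; split.
- by move=> y z; apply: Eeq; exact: (der_graphD gA (AE y) (AE z)).
- by move=> y z; apply: Eeq; have := der_graphM gA (AE y) (AE z); rewrite dualnum_mulE.
- by move=> a; apply: Eeq; case: gA.
Qed.

End DerivationGraph.

Section PowerSeriesConstants.
Variables (k : fieldType) (n : nat).

Lemma psC_add a b : @psC k n (a + b) = psadd (psC a) (psC b).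
Proof. by apply: funext => m; rewrite /psadd /psC; case: ifP; rewrite ?addr0. Qed.

Lemma psC_mul a b : psmul (@psC k n a) (psC b) = psC (a * b).
Proof.
apply: funext => m; rewrite /psmul /psC.
case: (boolP [forall j, m j == 0%N]) => [/forallP m0|mn0]; last first.
  apply: big1 => c _; case: ifP => [/forallP c0|]; last by rewrite mul0r.
  case: ifP => [/forallP cm|]; last by rewrite mulr0.
  by case/negP: mn0; apply/forallP => j; move: (c0 j) (cm j) => /= /eqP ->; rewrite subn0.
pose c0 : {ffun 'I_n -> 'I_(\max_(i < n) m i).+1} := [ffun _ => ord0].
rewrite (bigD1 c0); last by apply/forallP => i; rewrite ffunE.
set S := \big[_/_]_(c | _ && _) _.
have -> : S = 0.
  apply: big1 => c /andP[/forallP cm]; case/eqP; apply/ffunP => i.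
  by rewrite ffunE; apply: val_inj => /=; move: (cm i); rewrite (eqP (m0 i)) leqn0 => /eqP.
by rewrite /= addr0 !ifT ?mulr1 //; apply/forallP => i; rewrite ffunE ?subn0.
Qed.

End PowerSeriesConstants.

Lemma pchar_ps_alg_map (k : fieldType) (n : nat) (K : nzRingType) (phi : ps k n -> K) :
  [pchar k] =i pred0 -> ps_alg_map phi -> [pchar K] =i pred0.
Proof.
move=> /pcharf0P k0 [phiD phiM phi1] p; rewrite !inE.
apply/negbTE/negP => /andP[/prime_gt0 p_gt0 /eqP p0].
have phiC0 : phi (psC 0) = 0.
  by apply: (addrI (phi (psC 0))); rewrite -phiD -psC_add !addr0.
have phiCn i : phi (psC i%:R) = i%:R.
  by elim: i => [|i IHi]; rewrite ?phiC0 // -addn1 !natrD psC_add phiD IHi -phi1.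
have pk : p%:R != 0 :> k by rewrite k0 -lt0n.
have /eqP := @oner_neq0 K; apply.
by rewrite -phi1 /ps1 -(mulfV pk) -psC_mul phiM phiCn p0 mul0r.
Qed.

Lemma islin_id {R : nzRingType} {U : lmodType R} : islin (@id U).
Proof. by []. Qed.

Lemma islin_cst0 {R : nzRingType} {U V : lmodType R} : islin (fun _ : U => 0 : V).
Proof. by move=> *; rewrite scaler0 addr0. Qed.

Section LinearMaps.
Variable R : nzRingType.
Implicit Types U V W : lmodType R.

Lemma islinD U V (h : U -> V) : islin h -> forall a b, h (a + b) = h a + h b.
Proof. by move=> hl a b; rewrite -[a]scale1r hl !scale1r. Qed.

Lemma islin0 U V (h : U -> V) : islin h -> h 0 = 0.
Proof. by move=> hl; apply: (addrI (h 0)); rewrite -islinD // !addr0. Qed.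

Lemma islinZ U V (h : U -> V) : islin h -> forall (c : R) (a : U), h (c *: a) = c *: h a.
Proof. by move=> hl c a; have := hl c a 0; rewrite !addr0 (islin0 hl) addr0. Qed.

Lemma islinB U V (h : U -> V) : islin h -> forall a b, h (a - b) = h a - h b.
Proof. by move=> hl a b; rewrite addrC -scaleN1r hl scaleN1r addrC. Qed.

Lemma islin_sum U V (h : U -> V) (I : Type) (r : seq I) (F : I -> U) :
  islin h -> h (\sum_(i <- r) F i) = \sum_(i <- r) h (F i).
Proof. by move=> hl; apply: (big_morph h (islinD hl) (islin0 hl)). Qed.

Lemma islin_comp U V W (h : U -> V) (g : V -> W) : islin h -> islin g -> islin (g \o h).
Proof. by move=> hl gl a u v /=; rewrite hl gl. Qed.

Lemma islin_subr_comp U V (h : U -> V) (g : V -> U) :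
  islin h -> islin g -> islin (fun u => u - g (h u)).
Proof. by move=> hl gl a u v; rewrite hl gl scalerBr opprD addrACA. Qed.

Lemma split_exact U V W (u : U -> V) (v : V -> W) (g : V -> U) (s : W -> V) :
  islin s -> (forall x, g (u x) = x) -> (forall x, v (u x) = 0) ->
  (forall y, s (v y) = y - u (g y)) -> (forall z, v (s z) = z) ->
  [/\ injective u, forall y, v y = 0 <-> exists x, u x = y &
      forall z, exists y, v y = z].
Proof.
move=> sl gu vu sv vs; split.
- by move=> x1 x2 /(congr1 g); rewrite !gu.
- move=> y; split=> [vy0|[x <-]] //; exists (g y).
  by apply/eqP; rewrite eq_sym -subr_eq0 -sv vy0 (islin0 sl).
- by move=> z; exists (s z).
Qed.

End LinearMaps.

Section SpecialDerivations.
Variables (k : fieldType) (n : nat) (A : comNzRingType) (phi : ps k n -> A).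

Lemma special_der_comp (M N : lmodType A) (D : A -> M) (h : M -> N) :
  special_der phi D -> islin h -> special_der phi (h \o D).
Proof.
move=> [DD DM DC DS] hl; split => [x y|x y|c|f] /=.
- by rewrite DD (islinD hl).
- by rewrite DM (islinD hl) !(islinZ hl).
- by rewrite DC (islin0 hl).
- by rewrite DS (islin_sum _ _ hl); apply: eq_bigr => i _; rewrite (islinZ hl).
Qed.

Lemma special_universal_eq (Om : lmodType A) (d : A -> Om) :
  special_universal phi d -> forall (M : lmodType A) (h1 h2 : Om -> M),
  islin h1 -> islin h2 -> (forall x, h1 (d x) = h2 (d x)) -> h1 =1 h2.
Proof.
move=> [sd univ] M h1 h2 h1l h2l h12.
have [h [_ _ uniq]] := univ M (h1 \o d) (special_der_comp sd h1l).
by move=> w; rewrite (uniq h1 h1l) // (uniq h2 h2l) // => x /=; rewrite h12.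
Qed.

End SpecialDerivations.

Section KahlerDerivations.
Variables (K L : fieldType) (iota : {rmorphism K -> L}).

Lemma kahler_der_comp (M N : lmodType L) (D : L -> M) (h : M -> N) :
  kahler_der iota D -> islin h -> kahler_der iota (h \o D).
Proof.
move=> [DD DM DC] hl; split => [x y|x y|a] /=.
- by rewrite DD (islinD hl).
- by rewrite DM (islinD hl) !(islinZ hl).
- by rewrite DC (islin0 hl).
Qed.

Lemma kahler_universal_eq (Om : lmodType L) (d : L -> Om) :
  kahler_universal iota d -> forall (M : lmodType L) (h1 h2 : Om -> M),
  islin h1 -> islin h2 -> (forall x, h1 (d x) = h2 (d x)) -> h1 =1 h2.
Proof.
move=> [kd univ] M h1 h2 h1l h2l h12.
have [h [_ _ uniq]] := univ M (h1 \o d) (kahler_der_comp kd h1l).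
by move=> w; rewrite (uniq h1 h1l) // (uniq h2 h2l) // => x /=; rewrite h12.
Qed.

Lemma base_change_eq (U : lmodType K) (T : lmodType L) (j : U -> T) :
  base_change iota j -> forall (M : lmodType L) (h1 h2 : T -> M),
  islin h1 -> islin h2 -> (forall u, h1 (j u) = h2 (j u)) -> h1 =1 h2.
Proof.
move=> [jl univ] M h1 h2 h1l h2l h12.
have h1jl : semilin iota (h1 \o j) by move=> a u v /=; rewrite jl h1l.
have [h [_ _ uniq]] := univ M (h1 \o j) h1jl.
by move=> t; rewrite (uniq h1 h1l) // (uniq h2 h2l) // => x /=; rewrite h12.
Qed.

Lemma kahler_special (k : fieldType) (n : nat) (phi : ps k n -> K)
  (M : lmodType L) (D : L -> M) :
  kahler_der iota D -> special_der (iota \o phi) D.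
Proof.
case=> DD DM DC; split => // [c|f] /=; rewrite DC //.
by rewrite big1 // => i _; rewrite DC scaler0.
Qed.

End KahlerDerivations.

(* The L-module [V] viewed as a K-module through [iota]; a K-linear map into
   [restr iota V] is an [iota]-semilinear map into [V]. *)
Definition restr (K L : fieldType) (iota : {rmorphism K -> L}) (V : lmodType L) : Type := V.
HB.instance Definition _ (K L : fieldType) (iota : {rmorphism K -> L}) (V : lmodType L) :=
  GRing.Zmodule.on (restr iota V).

Section RestrictionOfScalars.
Variables (K L : fieldType) (iota : {rmorphism K -> L}) (V : lmodType L).

Definition restr_scale (a : K) (v : restr iota V) : restr iota V := iota a *: (v : V).

Fact restr_scaleA a b v : restr_scale a (restr_scale b v) = restr_scale (a * b) v.
Proof. by rewrite /restr_scale scalerA rmorphM. Qed.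
Fact restr_scale1 : left_id 1 restr_scale.
Proof. by move=> v; rewrite /restr_scale rmorph1 scale1r. Qed.
Fact restr_scaleDr : right_distributive restr_scale +%R.
Proof. by move=> a u v; rewrite /restr_scale scalerDr. Qed.
Fact restr_scaleDl v : {morph restr_scale^~ v : a b / a + b}.
Proof. by move=> a b; rewrite /restr_scale rmorphD scalerDl. Qed.

HB.instance Definition _ := GRing.Zmodule_isLmodule.Build K (restr iota V)
  restr_scaleA restr_scale1 restr_scaleDr restr_scaleDl.

End RestrictionOfScalars.

Section SpecialRestriction.
Variables (k : fieldType) (n : nat) (K L : fieldType).
Variables (phi : ps k n -> K) (iota : {rmorphism K -> L}) (M : lmodType L).

Lemma special_der_restr (E : L -> M) :
  special_der (iota \o phi) E -> special_der phi (E \o iota : K -> restr iota M).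
Proof.
case=> ED EM EC ES; split => [x y|x y|c|f] /=; last exact: ES; last exact: EC.
- by rewrite rmorphD ED.
- by rewrite rmorphM EM.
Qed.

Lemma special_der_lift (D : K -> restr iota M) (E : L -> M) :
  (forall x y, E (x + y) = E x + E y) ->
  (forall x y, E (x * y) = x *: E y + y *: E x) ->
  (forall a, E (iota a) = D a) ->
  special_der phi D -> special_der (iota \o phi) E.
Proof.
move=> ED EM ED_D [_ _ DC DS]; split => // [c|f] /=; rewrite ED_D ?DC // DS.
by apply: eq_bigr => i _; rewrite ED_D.
Qed.

End SpecialRestriction.

Section CotangentSequence.
Variables (k : fieldType) (n : nat) (K L : fieldType).
Variables (phi : ps k n -> K) (iota : {rmorphism K -> L}).
Variables (OK : lmodType K) (dK : K -> OK) (OL : lmodType L) (dL : L -> OL).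
Variables (OLK : lmodType L) (dLK : L -> OLK) (T : lmodType L) (j : OK -> T).
Hypotheses (univK : special_universal phi dK)
  (univL : special_universal (iota \o phi) dL)
  (univLK : kahler_universal iota dLK) (bcT : base_change iota j).

Lemma ex_base_change_map :
  exists u : T -> OL, islin u /\ forall f, u (j (dK f)) = dL (iota f).
Proof.
have [hK [hKl hKd _]] := univK.2 _ _ (special_der_restr univL.1).
have [u [ul uj _]] := bcT.2 OL hK hKl.
by exists u; split => // f; rewrite uj hKd.
Qed.

Lemma ex_map_to_kahler : exists v : OL -> OLK, islin v /\ forall g, v (dL g) = dLK g.
Proof.
have [v [vl vd _]] := univL.2 _ _ (kahler_special phi univLK.1).
by exists v.
Qed.

Variables (u : T -> OL) (v : OL -> OLK).
Hypotheses (ul : islin u) (uj : forall f, u (j (dK f)) = dL (iota f)).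
Hypotheses (vl : islin v) (vd : forall g, v (dL g) = dLK g).

Lemma map_to_kahler_comp_eq0 t : v (u t) = 0.
Proof.
have vuj : (fun w => v (u (j w)) : restr iota OLK) =1 (fun=> 0).
  apply: (special_universal_eq univK); [|exact: islin_cst0|].
  - by move=> a w1 w2 /=; rewrite bcT.1 ul vl.
  - by move=> x /=; rewrite uj vd; case: univLK => -[_ _ ->].
exact: (base_change_eq bcT (islin_comp ul vl) islin_cst0 vuj t).
Qed.

Lemma ex_retraction :
  [pchar L] =i pred0 -> exists g : OL -> T, islin g /\ forall t, g (u t) = t.
Proof.
move=> charL.
have jl : islin (j : OK -> restr iota T) := bcT.1.
have sDj : special_der phi (j \o dK : K -> restr iota T) := special_der_comp univK.1 jl.
have [derD derM _ _] := sDj.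
have [E [ED EM EI]] := @derivation_extends K L iota T (j \o dK) derD derM charL.
have [g [gl gE _]] := univL.2 T E (special_der_lift ED EM EI sDj).
exists g; split => // t.
have guj : (fun w => g (u (j w)) : restr iota T) =1 j.
  apply: (special_universal_eq univK); [|exact: jl|].
  - by move=> a w1 w2 /=; rewrite bcT.1 ul gl.
  - by move=> x /=; rewrite uj gE EI.
exact: (base_change_eq bcT (islin_comp ul gl) islin_id guj t).
Qed.

Lemma ex_section (g : OL -> T) : islin g -> (forall t, g (u t) = t) ->
  exists s : OLK -> OL,
    [/\ islin s, forall w, s (v w) = w - u (g w) & forall z, v (s z) = z].
Proof.
move=> gl gu; pose pi w := w - u (g w).
have pil : islin pi := islin_subr_comp gl ul.
(* [pi] kills [dL (iota a)] = [u (j (dK a))], so [pi \o dL] is a K-derivation. *)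
have kpi : kahler_der iota (pi \o dL).
  have [dLD dLM _ _] := univL.1.
  split => [x y|x y|a] /=.
  - by rewrite dLD (islinD pil).
  - by rewrite dLM (islinD pil) !(islinZ pil).
  - by rewrite /pi -uj gu subrr.
have [s [sl sd _]] := univLK.2 OL (pi \o dL) kpi.
exists s; split => //.
  by apply: (special_universal_eq univL (islin_comp vl sl) pil) => x /=; rewrite vd sd.
apply: (kahler_universal_eq univLK (islin_comp sl vl) islin_id) => y /=.
by rewrite sd /pi (islinB vl) vd map_to_kahler_comp_eq0 subr0.
Qed.

End CotangentSequence.

Unset Implicit Arguments.
Theorem lemmaA9 (k : fieldType) (n : nat) (K L : fieldType)
  (phi : ps k n -> K) (iota : {rmorphism K -> L})
  (OK : lmodType K) (dK : K -> OK)
  (OL : lmodType L) (dL : L -> OL)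
  (OLK : lmodType L) (dLK : L -> OLK)
  (T : lmodType L) (j : OK -> T) :
  [pchar k] =i pred0 ->
  ps_alg_map phi ->
  special_universal phi dK ->
  special_universal (iota \o phi) dL ->
  kahler_universal iota dLK ->
  base_change iota j ->
  exists (u : T -> OL) (v : OL -> OLK),
    [/\ islin u, islin v,
        forall f : K, u (j (dK f)) = dL (iota f),
        forall g : L, v (dL g) = dLK g &
        [/\ injective u,
            forall w : OL, v w = 0 <-> exists t : T, u t = w &
            forall z : OLK, exists w : OL, v w = z]].
Proof.
move=> chk phiA univK univL univLK bcT.
have charL : [pchar L] =i pred0.
  by move=> p; rewrite (fmorph_pchar iota) (pchar_ps_alg_map chk phiA).
have [u [ul uj]] := ex_base_change_map univK univL bcT.
have [v [vl vd]] := ex_map_to_kahler univL univLK.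
have [g [gl gu]] := ex_retraction univK univL bcT ul uj charL.
have [s [sl sv vs]] := ex_section univK univL univLK bcT ul uj vl vd gl gu.
exists u, v; split => //.
exact: split_exact sl gu (map_to_kahler_comp_eq0 univK univLK bcT ul uj vl vd) sv vs.
Qed.
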